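(* (Rohlin's Lemma for isometries) Let $S\subseteq\mathbb N$ be infinite. Then the set $\{g\in{\rm Iso}(\mathbb U): \exists n\in S\ g^n=1\}$ is dense in ${\rm Iso}(\mathbb U)$.
   Context: The Urysohn metric space $\mathbb U$ is, up to isometry, the unique complete separable metric space such that every isometric embedding of a finite metric space $\mathbf A$ into $\mathbb U$ extends to any one-point metric extension $\mathbf A\cup\{y\}$. ${\rm Iso}(\mathbb U)$ is its isometry group with the topology of pointwise convergence (basic neighbourhoods of the identity: $\{h: d(hx,x)<\epsilon\ \forall x\in\mathbf A\}$, $\mathbf A$ finite, $\epsilon>0$). *)

From Stdlib Require Import Reals List.
Open Scope R_scope.

Definition is_metric {X : Type} (d : X -> X -> R) : Prop :=
  (forall x y, 0 <= d x y) /\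
  (forall x y, d x y = 0 <-> x = y) /\
  (forall x y, d x y = d y x) /\
  (forall x y z, d x z <= d x y + d y z).

Definition finite_type (A : Type) : Prop :=
  exists l : list A, forall a, In a l.

Definition cauchy_seq {X : Type} (d : X -> X -> R) (u : nat -> X) : Prop :=
  forall eps, 0 < eps -> exists N, forall m n, (N <= m)%nat -> (N <= n)%nat ->
    d (u m) (u n) < eps.

Definition converges_to {X : Type} (d : X -> X -> R) (u : nat -> X) (l : X) : Prop :=
  forall eps, 0 < eps -> exists N, forall n, (N <= n)%nat -> d (u n) l < eps.

Definition complete_metric {X : Type} (d : X -> X -> R) : Prop :=
  forall u, cauchy_seq d u -> exists l, converges_to d u l.

(* Separable: there is a countable dense subset (given as a sequence).
   (For a nonempty space; the Urysohn extension property applied to the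
   empty space forces nonemptiness.) *)
Definition separable_metric {X : Type} (d : X -> X -> R) : Prop :=
  exists s : nat -> X, forall x eps, 0 < eps -> exists n, d x (s n) < eps.

Definition isometric_embedding {X Y : Type} (dX : X -> X -> R) (dY : Y -> Y -> R)
  (f : X -> Y) : Prop :=
  forall x y, dY (f x) (f y) = dX x y.

(* Extension property: every isometric embedding f of a finite metric space
   (A, dA) into U extends to any one-point metric extension A ∪ {y},
   modelled as [option A] (new point [None]) with a metric dB restricting
   to dA on [A]. *)
Definition urysohn_extension_property {U : Type} (d : U -> U -> R) : Prop :=
  forall (A : Type) (dA : A -> A -> R) (dB : option A -> option A -> R)
         (f : A -> U),
    finite_type A -> is_metric dA -> is_metric dB ->
    (forall a b, dB (Some a) (Some b) = dA a b) ->
    isometric_embedding dA d f ->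
    exists g : option A -> U,
      isometric_embedding dB d g /\ (forall a, g (Some a) = f a).

Definition urysohn_space {U : Type} (d : U -> U -> R) : Prop :=
  is_metric d /\ complete_metric d /\ separable_metric d /\
  urysohn_extension_property d.

Definition is_isometry {U : Type} (d : U -> U -> R) (g : U -> U) : Prop :=
  isometric_embedding d d g /\ (forall y, exists x, g x = y).

Fixpoint fpow {U : Type} (g : U -> U) (n : nat) : U -> U :=
  match n with
  | O => fun x => x
  | S k => fun x => g (fpow g k x)
  end.

Definition infinite_nat_set (S : nat -> Prop) : Prop :=
  forall m, exists n, (m <= n)%nat /\ S n.

(* Density in Iso(U) for the pointwise convergence topology: every basic
   neighbourhood {g : d(g x, h x) < eps for x in A} (A finite) of every
   h in Iso(U) meets the set P. *)
Definition dense_in_Iso {U : Type} (d : U -> U -> R) (P : (U -> U) -> Prop) : Prop :=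
  forall (h : U -> U) (A : list U) (eps : R),
    is_isometry d h -> 0 < eps ->
    exists g, is_isometry d g /\ P g /\ (forall x, In x A -> d (g x) (h x) < eps).

From Stdlib Require Import Reals List Lra Lia ZArith.
From Stdlib Require Import Classical ClassicalEpsilon FunctionalExtensionality.
Open Scope R_scope.

(* Fix [h], a finite [A], [eps] and a large [n] in [S]. The points of [A ∪ h A]
   are spread along [n]-periodic orbits: the index (block [j], phase [i]) carries a
   pseudometric built from [d(x, h^t y)], capped by the diameter and penalized by
   [|t| eps/2], minimized over the representatives of the phase difference modulo
   [n]. It is invariant under rotating phases, and the extension property realizes
   it in [U] with the phase-1 copy of each [a] within [eps] of [h a]. Such an
   invariant configuration can always be enlarged by one more orbit through any
   given point, by free amalgamation over the old points; exhausting a dense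
   sequence gives an invariant configuration with dense range, and the rotation
   then extends by completeness to an isometry [g] of [U] with [g^n = 1] that is
   [eps]-close to [h] on [A]. *)

(** * Realizing finite pseudometrics in the Urysohn space *)

Definition pseudometric_on (N : nat) (r : nat -> nat -> R) : Prop :=
  forall i j k, (i < N)%nat -> (j < N)%nat -> (k < N)%nat ->
    0 <= r i j /\ r i i = 0 /\ r i j = r j i /\ r i k <= r i j + r j k.

Lemma finite_bounded_sig (T : nat -> Prop) (N : nat) :
  (forall i, T i -> (i < N)%nat) -> finite_type {i : nat | T i}.
Proof.
  intros HT.
  destruct (classic (exists i0, T i0)) as [[i0 Hi0]|Hno].
  - set (mk := fun i => match excluded_middle_informative (T i) with
                   | left H => exist T i H
                   | right _ => exist T i0 Hi0 end).
    exists (map mk (seq 0 N)).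
    intros [i Hi]. apply in_map_iff. exists i. split.
    + unfold mk. destruct (excluded_middle_informative (T i)) as [H|H].
      * f_equal. apply proof_irrelevance.
      * contradiction.
    + apply in_seq. specialize (HT i Hi). lia.
  - exists nil. intros [i Hi]. exfalso. apply Hno. eauto.
Qed.

Lemma least_index_with_image {U : Type} (T : nat -> Prop) (g : nat -> U) i :
  T i -> exists i0, (T i0 /\ forall j, (j < i0)%nat -> T j -> g j <> g i0) /\ g i0 = g i.
Proof.
  induction i as [i IH] using lt_wf_ind. intros Ti.
  destruct (classic (exists j, (j < i)%nat /\ T j /\ g j = g i)) as [[j [Hj [Tj Hg]]]|Hno].
  - destruct (IH j Hj Tj) as [i0 [H1 H2]]. exists i0. split; auto. congruence.
  - exists i. split; auto. split; auto. intros j Hj Tj E. apply Hno. eauto.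
Qed.

Lemma pullback_is_metric {I : Type} (N : nat) (r : nat -> nat -> R) (idx : I -> nat) :
  pseudometric_on N r -> (forall a, (idx a < N)%nat) ->
  (forall a b, r (idx a) (idx b) = 0 -> a = b) ->
  is_metric (fun a b => r (idx a) (idx b)).
Proof.
  intros Hr HN Hinj. split; [|split; [|split]].
  - intros a b. destruct (Hr (idx a) (idx b) (idx a)) as (? & _); auto.
  - intros a b. split; [apply Hinj|].
    intros <-. destruct (Hr (idx a) (idx a) (idx a)) as (_ & ? & _); auto.
  - intros a b. destruct (Hr (idx a) (idx b) (idx a)) as (_ & _ & ? & _); auto.
  - intros a b c. destruct (Hr (idx a) (idx b) (idx c)) as (_ & _ & _ & ?); auto.
Qed.

Lemma urysohn_one_point_inj {U : Type} (d : U -> U -> R) (r : nat -> nat -> R) (N : nat)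
  (T : nat -> Prop) (g : nat -> U) (w : nat) :
  is_metric d -> urysohn_extension_property d -> pseudometric_on N r ->
  (forall i, T i -> (i < N)%nat) -> (w < N)%nat ->
  (forall i, T i -> 0 < r i w) ->
  (forall i j, T i -> T j -> d (g i) (g j) = r i j) ->
  (forall i j, T i -> T j -> g i = g j -> i = j) ->
  exists z, forall i, T i -> d (g i) z = r i w.
Proof.
  intros Hd Hu Hr HT Hw Hpos Hg Hinj.
  pose proof Hd as (_ & dz & _).
  set (A := {i : nat | T i}).
  set (idx := fun o : option A => match o with None => w | Some a => proj1_sig a end).
  assert (HN : forall o, (idx o < N)%nat) by (intros [[a Ta]|]; simpl; auto).
  assert (Hsig : forall a b : A, r (proj1_sig a) (proj1_sig b) = 0 -> a = b).
  { intros [a Ta] [b Tb]; simpl; intros E. rewrite <- Hg in E by auto.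
    apply dz, Hinj in E; auto. subst b. f_equal. apply proof_irrelevance. }
  assert (MB : is_metric (fun o o' => r (idx o) (idx o'))).
  { apply (pullback_is_metric N); auto.
    intros [[a Ta]|] [[b Tb]|]; simpl; intros E.
    - f_equal. apply Hsig. auto.
    - pose proof (Hpos a Ta). lra.
    - destruct (Hr w b w) as (_ & _ & Hs & _); auto. pose proof (Hpos b Tb). lra.
    - reflexivity. }
  assert (MA : is_metric (fun a b : A => r (proj1_sig a) (proj1_sig b)))
    by (apply (pullback_is_metric N); auto; intros [a Ta]; simpl; auto).
  destruct (Hu A _ _ (fun a => g (proj1_sig a)) (finite_bounded_sig T N HT)
              MA MB (fun a b => eq_refl)) as [G [HG1 HG2]].
  { intros [a Ta] [b Tb]. apply Hg; auto. }
  exists (G None). intros i Ti.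
  change i with (proj1_sig (exist T i Ti : A)) at 1. rewrite <- HG2, HG1. reflexivity.
Qed.

(* The extension property only applies to metric spaces, so the indices in [T]
   are first reduced to one representative per point [g i]. *)
Lemma urysohn_one_point {U : Type} (d : U -> U -> R) (r : nat -> nat -> R) (N : nat)
  (T : nat -> Prop) (g : nat -> U) (w : nat) :
  is_metric d -> urysohn_extension_property d -> pseudometric_on N r ->
  (forall i, T i -> (i < N)%nat) -> (w < N)%nat ->
  (forall i, T i -> 0 < r i w) ->
  (forall i j, T i -> T j -> d (g i) (g j) = r i j) ->
  exists z, forall i, T i -> d (g i) z = r i w.
Proof.
  intros Hd Hu Hr HT Hw Hpos Hg.
  set (Rep := fun i => T i /\ forall j, (j < i)%nat -> T j -> g j <> g i).
  destruct (urysohn_one_point_inj d r N Rep g w Hd Hu Hr) as [z Hz].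
  - intros i [Ti _]. auto.
  - exact Hw.
  - intros i [Ti _]. auto.
  - intros i j [Ti _] [Tj _]. auto.
  - intros i j [Ti Ri] [Tj Rj] E.
    destruct (lt_eq_lt_dec i j) as [[H|H]|H]; auto; exfalso.
    + exact (Rj i H Ti E).
    + exact (Ri j H Tj (eq_sym E)).
  - exists z. intros i Ti. destruct (least_index_with_image T g i Ti) as [i0 [R0 E0]].
    assert (Ti0 : T i0) by apply R0.
    assert (E : r i i0 = 0) by (rewrite <- Hg, E0 by auto; apply Hd; reflexivity).
    rewrite <- E0, Hz by auto.
    destruct (Hr i i0 w) as (_ & _ & S1 & T1); auto.
    destruct (Hr i0 i w) as (_ & _ & _ & T2); auto.
    lra.
Qed.

Lemma urysohn_extend_one {U : Type} (d : U -> U -> R) (r : nat -> nat -> R) (N : nat)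
  (T : nat -> Prop) (g : nat -> U) (w : nat) :
  is_metric d -> urysohn_extension_property d -> pseudometric_on N r ->
  (forall i, T i -> (i < N)%nat) -> (w < N)%nat -> ~ T w ->
  (forall i, T i -> 0 < r i w) ->
  (forall i j, T i -> T j -> d (g i) (g j) = r i j) ->
  exists g', (forall i, T i -> g' i = g i) /\
    (forall i j, (T i \/ i = w) -> (T j \/ j = w) -> d (g' i) (g' j) = r i j).
Proof.
  intros Hd Hu Hr HT Hw HTw Hpos Hg.
  destruct (urysohn_one_point d r N T g w Hd Hu Hr HT Hw Hpos Hg) as [z Hz].
  pose proof Hd as (_ & dz & ds & _).
  exists (fun i => if Nat.eq_dec i w then z else g i). split.
  - intros i Ti. destruct (Nat.eq_dec i w); subst; [contradiction|auto].
  - intros i j Hi Hj.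
    destruct (Nat.eq_dec i w) as [ei|ei], (Nat.eq_dec j w) as [ej|ej]; subst.
    + destruct (Hr w w w) as (_ & -> & _); auto. apply dz; auto.
    + destruct Hj as [Hj|Hj]; [|contradiction]. rewrite ds, Hz by auto.
      destruct (Hr j w j) as (_ & _ & ? & _); auto.
    + destruct Hi as [Hi|Hi]; [|contradiction]. auto.
    + destruct Hi as [Hi|Hi]; [|contradiction]. destruct Hj as [Hj|Hj]; [|contradiction]. auto.
Qed.

Lemma urysohn_realize {U : Type} (d : U -> U -> R) (r : nat -> nat -> R) (N : nat)
  (P : nat -> Prop) (f : nat -> U) :
  is_metric d -> urysohn_extension_property d -> pseudometric_on N r ->
  (forall i, P i -> (i < N)%nat) ->
  (forall i j, (i < N)%nat -> (j < N)%nat -> ~ P j -> i <> j -> 0 < r i j) ->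
  (forall i j, P i -> P j -> d (f i) (f j) = r i j) ->
  exists g, (forall i, P i -> g i = f i) /\
    (forall i j, (i < N)%nat -> (j < N)%nat -> d (g i) (g j) = r i j).
Proof.
  intros Hd Hu Hr HP Hpos Hf.
  assert (Hind : forall K, exists g, (forall i, P i -> g i = f i) /\
     (forall i j, (P i \/ (i < K /\ i < N)%nat) -> (P j \/ (j < K /\ j < N)%nat) ->
        d (g i) (g j) = r i j)).
  { induction K as [|K [g [Hg1 Hg2]]].
    - exists f. split; auto. intros i j [Hi|Hi] [Hj|Hj]; auto; lia.
    - assert (Hlt : forall i, (P i \/ (i < S K /\ i < N)%nat) ->
                P i \/ (i < K /\ i < N)%nat \/ (i = K /\ K < N)%nat)
        by (intros i [Hi|Hi]; auto; lia).
      destruct (classic (P K \/ (N <= K)%nat)) as [Hc|Hc].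
      + exists g. split; auto. intros i j Hi Hj. apply Hg2.
        * destruct (Hlt i Hi) as [? | [? | [-> ?]]]; auto. destruct Hc; auto; lia.
        * destruct (Hlt j Hj) as [? | [? | [-> ?]]]; auto. destruct Hc; auto; lia.
      + apply not_or_and in Hc. destruct Hc as [HPK HNK].
        destruct (urysohn_extend_one d r N (fun i => P i \/ (i < K /\ i < N)%nat) g K Hd Hu Hr)
          as [g' [H1 H2]]; auto.
        * intros i [Hi|Hi]; auto; lia.
        * lia.
        * intros [H|H]; auto; lia.
        * intros i Hi. apply Hpos; auto; [destruct Hi; auto; lia|lia|].
          intro E; subst. destruct Hi; auto; lia.
        * exists g'. split; [intros i Hi; rewrite H1; auto|].
          intros i j Hi Hj. apply H2.
          -- destruct (Hlt i Hi) as [? | [? | [-> ?]]]; auto.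
          -- destruct (Hlt j Hj) as [? | [? | [-> ?]]]; auto. }
  destruct (Hind N) as [g [H1 H2]]. exists g. split; auto.
Qed.

(** * Powers and block rotations *)

Lemma fpow_add {X : Type} (g : X -> X) a b x : fpow g (a + b) x = fpow g a (fpow g b x).
Proof. induction a; simpl; auto. rewrite IHa; auto. Qed.

Lemma fpow_succ_r {X : Type} (g : X -> X) a x : fpow g a (g x) = fpow g (S a) x.
Proof. replace (S a) with (a + 1)%nat by lia. rewrite fpow_add. reflexivity. Qed.

Lemma fpow_isometry {X : Type} (d : X -> X -> R) (g : X -> X) k x y :
  isometric_embedding d d g -> d (fpow g k x) (fpow g k y) = d x y.
Proof. intros H. induction k; simpl; auto. rewrite H; auto. Qed.

Open Scope nat_scope.

(* [rot n] cuts [nat] into blocks [[q n, q n + n)] and rotates each block by one step. *)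
Definition rot (n u : nat) : nat := u / n * n + S (u mod n) mod n.

Lemma div_mod_block (n q r : nat) : 0 < n -> r < n -> (q * n + r) / n = q /\ (q * n + r) mod n = r.
Proof.
  intros Hn Hr. split.
  - rewrite Nat.add_comm, Nat.div_add by lia. rewrite Nat.div_small by lia. lia.
  - rewrite Nat.add_comm, Nat.Div0.mod_add. apply Nat.mod_small; lia.
Qed.

Lemma rot_pow n a u : 0 < n -> fpow (rot n) a u = u / n * n + (u mod n + a) mod n.
Proof.
  intros Hn. induction a as [|a IH]; simpl.
  - rewrite Nat.add_0_r, Nat.Div0.mod_mod, Nat.mul_comm, <- Nat.div_mod_eq. reflexivity.
  - rewrite IH. unfold rot.
    assert (Hr : (u mod n + a) mod n < n) by (apply Nat.mod_upper_bound; lia).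
    destruct (div_mod_block n (u / n) _ Hn Hr) as [-> ->].
    f_equal. rewrite <- Nat.add_1_r, Nat.Div0.add_mod_idemp_l. f_equal. lia.
Qed.

Lemma rot_pow_div n a u : 0 < n -> fpow (rot n) a u / n = u / n.
Proof.
  intros Hn. rewrite rot_pow by auto. apply div_mod_block; auto. apply Nat.mod_upper_bound; lia.
Qed.

Lemma rot_pow_mod n a u : 0 < n -> fpow (rot n) a u mod n = (u mod n + a) mod n.
Proof.
  intros Hn. rewrite rot_pow by auto. apply div_mod_block; auto. apply Nat.mod_upper_bound; lia.
Qed.

Lemma rot_mod n u : 0 < n -> rot n u mod n = (u mod n + 1) mod n.
Proof. apply (rot_pow_mod n 1). Qed.

Lemma rot_div n u : 0 < n -> rot n u / n = u / n.
Proof. apply (rot_pow_div n 1). Qed.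

Lemma rot_pow_period n u : 0 < n -> fpow (rot n) n u = u.
Proof.
  intros Hn. rewrite rot_pow by auto.
  rewrite <- Nat.Div0.add_mod_idemp_r, Nat.Div0.mod_same, Nat.add_0_r, Nat.Div0.mod_mod.
  rewrite Nat.mul_comm, <- Nat.div_mod_eq. reflexivity.
Qed.

Lemma rot_pow_mod_exp n a u : 0 < n -> fpow (rot n) a u = fpow (rot n) (a mod n) u.
Proof. intros Hn. rewrite !rot_pow, Nat.Div0.add_mod_idemp_r by auto. reflexivity. Qed.

Lemma rot_pow_lt n a u L : 0 < n -> u < L * n -> fpow (rot n) a u < L * n.
Proof.
  intros Hn Hu. rewrite rot_pow by auto.
  assert (u / n < L) by (apply Nat.Div0.div_lt_upper_bound; lia).
  assert ((u mod n + a) mod n < n) by (apply Nat.mod_upper_bound; lia).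
  nia.
Qed.

Lemma rot_lt n u L : 0 < n -> u < L * n -> rot n u < L * n.
Proof. apply (rot_pow_lt n 1). Qed.

Lemma rot_last_block n L u : 0 < n -> L * n <= u < S L * n ->
  L * n <= rot n u < S L * n /\ rot n u - L * n = (u - L * n + 1) mod n.
Proof.
  intros Hn Hu.
  assert (Hr : u - L * n < n) by (simpl in Hu; lia).
  destruct (div_mod_block n L (u - L * n) Hn Hr) as [E1 E2].
  replace (L * n + (u - L * n)) with u in E1, E2 by lia.
  change (rot n u) with (fpow (rot n) 1 u). rewrite rot_pow, E1, E2 by auto.
  assert ((u - L * n + 1) mod n < n) by (apply Nat.mod_upper_bound; lia).
  simpl. split; nia.
Qed.

Close Scope nat_scope.

(** * Rotation-invariant configurations approximating [h] *)

Definition rot_invariant {U : Type} (d : U -> U -> R) (n : nat) (p : nat -> U) (L : nat) : Prop :=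
  forall u v, (u < L * n)%nat -> (v < L * n)%nat -> d (p (rot n u)) (p (rot n v)) = d (p u) (p v).

Lemma rot_invariant_pow {U : Type} (d : U -> U -> R) n p L k u v : (0 < n)%nat ->
  rot_invariant d n p L -> (u < L * n)%nat -> (v < L * n)%nat ->
  d (p (fpow (rot n) k u)) (p (fpow (rot n) k v)) = d (p u) (p v).
Proof.
  intros Hn HI Hu Hv. induction k; simpl; auto.
  rewrite HI; auto; apply rot_pow_lt; auto.
Qed.

Section WindingMetric.
Variable U : Type.
Variable d : U -> U -> R.
Variable h : U -> U.
Hypothesis Hd : is_metric d.
Hypothesis Hh : isometric_embedding d d h.

Let dsym x y : d x y = d y x. Proof. apply Hd. Qed.
Let dtri x y z : d x z <= d x y + d y z. Proof. apply Hd. Qed.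
Let dnn x y : 0 <= d x y. Proof. apply Hd. Qed.
Let dself x : d x x = 0. Proof. apply Hd; reflexivity. Qed.

(* [orbit_gap x y t] is "d(x, h^t y)" for [t : Z], without inverting [h]. *)
Definition orbit_gap (x y : U) (t : Z) : R :=
  d (fpow h (Z.to_nat (- t)) x) (fpow h (Z.to_nat t) y).

Lemma orbit_gap_pow a b x y : d (fpow h a x) (fpow h b y) = orbit_gap x y (Z.of_nat b - Z.of_nat a).
Proof.
  unfold orbit_gap. destruct (le_lt_dec a b) as [H|H].
  - replace b with (a + (b - a))%nat at 1 by lia. rewrite fpow_add, fpow_isometry by auto.
    replace (Z.to_nat (- (Z.of_nat b - Z.of_nat a))) with 0%nat by lia.
    replace (Z.to_nat (Z.of_nat b - Z.of_nat a)) with (b - a)%nat by lia. reflexivity.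
  - replace a with (b + (a - b))%nat at 1 by lia. rewrite fpow_add, fpow_isometry by auto.
    replace (Z.to_nat (- (Z.of_nat b - Z.of_nat a))) with (a - b)%nat by lia.
    replace (Z.to_nat (Z.of_nat b - Z.of_nat a)) with 0%nat by lia. reflexivity.
Qed.

Lemma orbit_gap_triangle x y z t1 t2 :
  orbit_gap x z (t1 + t2) <= orbit_gap x y t1 + orbit_gap y z t2.
Proof.
  set (N := Z.to_nat (Z.abs t1 + Z.abs t2)).
  set (a1 := Z.to_nat (Z.of_nat N + t1)).
  set (a2 := Z.to_nat (Z.of_nat N + t1 + t2)).
  replace (orbit_gap x y t1) with (d (fpow h N x) (fpow h a1 y))
    by (rewrite orbit_gap_pow; f_equal; unfold a1, N; lia).
  replace (orbit_gap y z t2) with (d (fpow h a1 y) (fpow h a2 z))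
    by (rewrite orbit_gap_pow; f_equal; unfold a1, a2, N; lia).
  replace (orbit_gap x z (t1 + t2)) with (d (fpow h N x) (fpow h a2 z))
    by (rewrite orbit_gap_pow; f_equal; unfold a2, N; lia).
  apply dtri.
Qed.

Lemma orbit_gap_opp x y t : orbit_gap y x (- t) = orbit_gap x y t.
Proof. unfold orbit_gap. rewrite Z.opp_involutive. apply dsym. Qed.

Variable C delta : R.
Hypothesis Hdelta : 0 < delta.
Hypothesis HC : 1 <= C.

(* Capping at the diameter bound [C] and charging [delta] per unit of [|t|] makes
   large shifts never shortest, which is what allows reducing [t] modulo [n]. *)
Definition penalized_gap (x y : U) (t : Z) : R := Rmin (orbit_gap x y t) C + IZR (Z.abs t) * delta.

Let IZR_abs_nonneg t : 0 <= IZR (Z.abs t). Proof. apply IZR_le. lia. Qed.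

Lemma penalized_gap_nonneg x y t : 0 <= penalized_gap x y t.
Proof.
  unfold penalized_gap. pose proof (dnn (fpow h (Z.to_nat (- t)) x) (fpow h (Z.to_nat t) y)).
  pose proof (IZR_abs_nonneg t). unfold Rmin; destruct Rle_dec; unfold orbit_gap in *; nra.
Qed.

Lemma penalized_gap_ge x y t : IZR (Z.abs t) * delta <= penalized_gap x y t.
Proof.
  unfold penalized_gap, orbit_gap.
  pose proof (dnn (fpow h (Z.to_nat (- t)) x) (fpow h (Z.to_nat t) y)).
  unfold Rmin; destruct Rle_dec; lra.
Qed.

Lemma penalized_gap_le x y t : penalized_gap x y t <= C + IZR (Z.abs t) * delta.
Proof. unfold penalized_gap. pose proof (Rmin_r (orbit_gap x y t) C). lra. Qed.

Lemma penalized_gap_triangle x y z t1 t2 :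
  penalized_gap x z (t1 + t2) <= penalized_gap x y t1 + penalized_gap y z t2.
Proof.
  unfold penalized_gap. pose proof (orbit_gap_triangle x y z t1 t2).
  pose proof (dnn (fpow h (Z.to_nat (- t1)) x) (fpow h (Z.to_nat t1) y)).
  pose proof (dnn (fpow h (Z.to_nat (- t2)) y) (fpow h (Z.to_nat t2) z)).
  assert (IZR (Z.abs (t1 + t2)) <= IZR (Z.abs t1) + IZR (Z.abs t2))
    by (rewrite <- plus_IZR; apply IZR_le; lia).
  unfold orbit_gap in *. unfold Rmin. repeat destruct Rle_dec; nra.
Qed.

Lemma penalized_gap_opp x y t : penalized_gap y x (- t) = penalized_gap x y t.
Proof. unfold penalized_gap. rewrite orbit_gap_opp, Z.abs_opp. reflexivity. Qed.

Lemma penalized_gap_0 x y : penalized_gap x y 0 = Rmin (d x y) C.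
Proof. unfold penalized_gap, orbit_gap. simpl. ring. Qed.

Variable xs : list U.
Variable x0 : U.
Variable n : nat.
Hypothesis Hn : (2 <= n)%nat.
Hypothesis Hnodup : NoDup xs.
Hypothesis Hdiam : forall j j', (j < length xs)%nat -> (j' < length xs)%nat ->
  d (nth j xs x0) (nth j' xs x0) <= C.
Hypothesis Hlong : 2 * C <= INR n * delta.

Definition block_point (u : nat) : U := nth (u / n) xs x0.
Definition phase (u : nat) : Z := Z.of_nat (u mod n).
Let nz : Z := Z.of_nat n.

(* Index [u] stands for the [(u mod n)]-th image of [block_point u] under the
   periodic isometry to be built; the distance takes the best of the two
   representatives of the phase difference in the open interval (-n, n). *)
Definition wind_dist (u v : nat) : R :=
  let o := Z.modulo (phase v - phase u) nz in
  if Z.eq_dec o 0 then penalized_gap (block_point u) (block_point v) 0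
  else Rmin (penalized_gap (block_point u) (block_point v) o)
            (penalized_gap (block_point u) (block_point v) (o - nz)).

Let nz_pos : (0 < nz)%Z. Proof. unfold nz. lia. Qed.

Let nz_INR : IZR nz = INR n. Proof. unfold nz. rewrite INR_IZR_INZ. reflexivity. Qed.

Let phase_bound u : (0 <= phase u < nz)%Z.
Proof. unfold phase, nz. pose proof (Nat.mod_upper_bound u n). lia. Qed.

Let divide_sub_mod (D : Z) : (nz | D - D mod nz)%Z.
Proof. rewrite Z.mod_eq by lia. exists (D / nz)%Z. ring. Qed.

Lemma wind_dist_attained u v : exists t,
  wind_dist u v = penalized_gap (block_point u) (block_point v) t /\
  (nz | phase v - phase u - t)%Z /\ (Z.abs t < nz)%Z.
Proof.
  unfold wind_dist. set (D := (phase v - phase u)%Z).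
  pose proof (divide_sub_mod D) as HD.
  pose proof (Z.mod_pos_bound D nz nz_pos) as Hb.
  destruct (Z.eq_dec (D mod nz) 0) as [E|E].
  - exists 0%Z. rewrite E, Z.sub_0_r in HD. rewrite Z.sub_0_r. repeat split; auto; lia.
  - unfold Rmin. destruct Rle_dec.
    + exists (D mod nz)%Z. repeat split; auto; lia.
    + exists (D mod nz - nz)%Z. repeat split; [|lia].
      replace (D - (D mod nz - nz))%Z with ((D - D mod nz) + nz)%Z by ring.
      apply Z.divide_add_r; auto. apply Z.divide_refl.
Qed.

Lemma wind_dist_le u v t : (nz | phase v - phase u - t)%Z -> (Z.abs t < nz)%Z ->
  wind_dist u v <= penalized_gap (block_point u) (block_point v) t.
Proof.
  intros Ht Hta. unfold wind_dist. set (D := (phase v - phase u)%Z) in *.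
  pose proof (Z.mod_pos_bound D nz nz_pos) as Hb.
  assert (Hk : (nz | t - D mod nz)%Z).
  { replace (t - D mod nz)%Z with ((D - D mod nz) - (D - t))%Z by ring.
    apply Z.divide_sub_r; auto. }
  destruct Hk as [k Hk].
  assert (k = 0 \/ k = -1)%Z as [-> | ->] by nia.
  - replace t with (D mod nz)%Z by lia.
    destruct (Z.eq_dec (D mod nz) 0) as [E|E]; [rewrite E; lra|apply Rmin_l].
  - replace t with (D mod nz - nz)%Z by lia.
    destruct (Z.eq_dec (D mod nz) 0) as [E|E]; [lia|apply Rmin_r].
Qed.

Lemma wind_dist_bound u v : wind_dist u v <= C + INR n * delta / 2.
Proof.
  unfold wind_dist. set (D := (phase v - phase u)%Z).
  pose proof (Z.mod_pos_bound D nz nz_pos) as Hb.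
  assert (Hhalf : forall t, (2 * Z.abs t <= nz)%Z ->
            penalized_gap (block_point u) (block_point v) t <= C + INR n * delta / 2).
  { intros t Ht. eapply Rle_trans; [apply penalized_gap_le|].
    assert (2 * IZR (Z.abs t) <= INR n) by (rewrite <- nz_INR, <- mult_IZR; apply IZR_le; lia).
    nra. }
  destruct (Z.eq_dec (D mod nz) 0) as [E|E]; [apply Hhalf; simpl; lia|].
  destruct (Z_le_gt_dec (2 * (D mod nz)) nz) as [H|H].
  - eapply Rle_trans; [apply Rmin_l|]. apply Hhalf. lia.
  - eapply Rle_trans; [apply Rmin_r|]. apply Hhalf. lia.
Qed.

Lemma wind_dist_nonneg u v : 0 <= wind_dist u v.
Proof. destruct (wind_dist_attained u v) as [t [-> _]]. apply penalized_gap_nonneg. Qed.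

Lemma wind_dist_refl u : wind_dist u u = 0.
Proof.
  apply Rle_antisym; [|apply wind_dist_nonneg].
  eapply Rle_trans; [apply (wind_dist_le u u 0)|].
  - rewrite !Z.sub_diag. apply Z.divide_0_r.
  - simpl. lia.
  - rewrite penalized_gap_0, dself. unfold Rmin. destruct Rle_dec; lra.
Qed.

Lemma wind_dist_sym u v : wind_dist u v = wind_dist v u.
Proof.
  assert (Hle : forall u v, wind_dist v u <= wind_dist u v).
  { clear u v. intros u v. destruct (wind_dist_attained u v) as [t [-> [Ht Hta]]].
    rewrite <- penalized_gap_opp. apply wind_dist_le; [|lia].
    replace (phase u - phase v - - t)%Z with (- (phase v - phase u - t))%Z by ring.
    apply Z.divide_opp_r. auto. }
  apply Rle_antisym; auto.
Qed.

Lemma wind_dist_triangle u v w : wind_dist u w <= wind_dist u v + wind_dist v w.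
Proof.
  destruct (wind_dist_attained u v) as [t1 [-> [H1 A1]]].
  destruct (wind_dist_attained v w) as [t2 [-> [H2 A2]]].
  destruct (Z_lt_le_dec (Z.abs (t1 + t2)) nz) as [Hs|Hs].
  - eapply Rle_trans; [apply (wind_dist_le u w (t1 + t2))|apply penalized_gap_triangle]; auto.
    replace (phase w - phase u - (t1 + t2))%Z
      with ((phase v - phase u - t1) + (phase w - phase v - t2))%Z by ring.
    apply Z.divide_add_r; auto.
  - pose proof (penalized_gap_ge (block_point u) (block_point v) t1).
    pose proof (penalized_gap_ge (block_point v) (block_point w) t2).
    pose proof (wind_dist_bound u w).
    assert (INR n <= IZR (Z.abs t1) + IZR (Z.abs t2))
      by (rewrite <- nz_INR, <- plus_IZR; apply IZR_le; lia).
    nra.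
Qed.

Lemma wind_dist_pseudometric N : pseudometric_on N wind_dist.
Proof.
  intros i j k _ _ _.
  repeat split; auto using wind_dist_nonneg, wind_dist_refl, wind_dist_sym, wind_dist_triangle.
Qed.

Lemma wind_dist_pos u v : (u < length xs * n)%nat -> (v < length xs * n)%nat -> u <> v ->
  0 < wind_dist u v.
Proof.
  intros Hu Hv Huv. destruct (Rlt_or_le 0 (wind_dist u v)) as [H|H]; auto. exfalso.
  destruct (wind_dist_attained u v) as [t [E [Ht Hta]]]. rewrite E in H.
  pose proof (penalized_gap_nonneg (block_point u) (block_point v) t).
  pose proof (penalized_gap_ge (block_point u) (block_point v) t).
  assert (t = 0%Z) as ->.
  { destruct (Z.eq_dec t 0) as [|Hne]; auto. exfalso.
    assert (1 <= IZR (Z.abs t)) by (apply IZR_le; lia). nra. }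
  rewrite Z.sub_0_r in Ht. pose proof (phase_bound u). pose proof (phase_bound v).
  destruct Ht as [k Hk]. assert (k = 0%Z) as -> by nia.
  assert (Hm : (u mod n = v mod n)%nat) by (unfold phase in Hk; lia).
  rewrite penalized_gap_0 in H.
  assert (Hx : block_point u = block_point v).
  { apply Hd. pose proof (dnn (block_point u) (block_point v)).
    unfold Rmin in H; destruct Rle_dec; lra. }
  assert (Hq : (u / n = v / n)%nat).
  { eapply NoDup_nth; eauto; apply Nat.Div0.div_lt_upper_bound; lia. }
  apply Huv. rewrite (Nat.div_mod_eq u n), (Nat.div_mod_eq v n). lia.
Qed.

Let block_point_rot u : block_point (rot n u) = block_point u.
Proof. unfold block_point. rewrite rot_div by lia. reflexivity. Qed.

Let phase_rot u : (nz | phase (rot n u) - phase u - 1)%Z.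
Proof.
  unfold phase. rewrite rot_mod by lia.
  rewrite Nat2Z.inj_mod, Nat2Z.inj_add. fold nz.
  set (D := (Z.of_nat (u mod n) + Z.of_nat 1)%Z).
  replace (D mod nz - Z.of_nat (u mod n) - 1)%Z with (- (D - D mod nz))%Z by (unfold D; lia).
  apply Z.divide_opp_r, divide_sub_mod.
Qed.

Let phase_diff_rot u v t :
  (nz | phase (rot n v) - phase (rot n u) - t)%Z <-> (nz | phase v - phase u - t)%Z.
Proof.
  pose proof (phase_rot u). pose proof (phase_rot v). split; intros H1.
  - replace (phase v - phase u - t)%Z with ((phase (rot n v) - phase (rot n u) - t)
      - (phase (rot n v) - phase v - 1) + (phase (rot n u) - phase u - 1))%Z by ring.
    apply Z.divide_add_r; [apply Z.divide_sub_r|]; auto.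
  - replace (phase (rot n v) - phase (rot n u) - t)%Z with ((phase v - phase u - t)
      + (phase (rot n v) - phase v - 1) - (phase (rot n u) - phase u - 1))%Z by ring.
    apply Z.divide_sub_r; [apply Z.divide_add_r|]; auto.
Qed.

Lemma wind_dist_rot u v : wind_dist (rot n u) (rot n v) = wind_dist u v.
Proof.
  apply Rle_antisym.
  - destruct (wind_dist_attained u v) as [t [-> [Ht Hta]]].
    rewrite <- (block_point_rot u), <- (block_point_rot v).
    apply wind_dist_le; auto. apply phase_diff_rot; auto.
  - destruct (wind_dist_attained (rot n u) (rot n v)) as [t [-> [Ht Hta]]].
    rewrite (block_point_rot u), (block_point_rot v).
    apply wind_dist_le; auto. apply phase_diff_rot; auto.
Qed.

Lemma wind_dist_phase0 u v : (u mod n = 0)%nat -> (v mod n = 0)%nat ->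
  (u / n < length xs)%nat -> (v / n < length xs)%nat ->
  wind_dist u v = d (block_point u) (block_point v).
Proof.
  intros Hu Hv Hu' Hv'. destruct (wind_dist_attained u v) as [t [-> [Ht Hta]]].
  unfold phase in Ht. rewrite Hu, Hv in Ht. simpl in Ht.
  destruct Ht as [k Hk]. assert (k = 0%Z) as -> by nia. replace t with 0%Z by lia.
  rewrite penalized_gap_0. unfold Rmin. destruct Rle_dec as [|H]; auto.
  exfalso. apply H, Hdiam; auto.
Qed.

Lemma wind_dist_rot_phase0 u v : (u mod n = 0)%nat -> (v mod n = 0)%nat ->
  block_point v = h (block_point u) -> wind_dist (rot n u) v <= delta.
Proof.
  intros Hu Hv Hx.
  assert (Hs : (rot n u mod n = 1)%nat).
  { rewrite rot_mod, Hu by lia. apply Nat.mod_small. lia. }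
  eapply Rle_trans; [apply (wind_dist_le _ _ (-1))|].
  - unfold phase. rewrite Hs, Hv. simpl. apply Z.divide_0_r.
  - unfold nz. simpl. lia.
  - unfold penalized_gap, orbit_gap. simpl. rewrite block_point_rot, Hx, dself.
    unfold Rmin. destruct Rle_dec; lra.
Qed.

Hypothesis Hu : urysohn_extension_property d.

Lemma winding_configuration : exists p,
  rot_invariant d n p (length xs) /\
  (forall j, (j < length xs)%nat -> p (j * n)%nat = nth j xs x0) /\
  (forall j j', (j < length xs)%nat -> (j' < length xs)%nat ->
     nth j' xs x0 = h (nth j xs x0) -> d (p (rot n (j * n))) (p (j' * n)%nat) <= delta).
Proof.
  set (m := length xs).
  assert (Hblock : forall j, (j < m)%nat ->
            ((j * n) mod n = 0 /\ (j * n) / n = j /\ j * n < m * n)%nat).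
  { intros j Hj. rewrite Nat.Div0.mod_mul, Nat.div_mul by lia. nia. }
  destruct (urysohn_realize d wind_dist (m * n) (fun u => u mod n = 0 /\ u < m * n)%nat
              block_point Hd Hu (wind_dist_pseudometric _)) as [p [Hp1 Hp2]].
  - intros i [_ Hi]; auto.
  - intros i j Hi Hj _ Hij. apply wind_dist_pos; auto.
  - intros i j [Hi Hi'] [Hj Hj']. symmetry.
    apply wind_dist_phase0; auto; apply Nat.Div0.div_lt_upper_bound; lia.
  - exists p. split; [|split].
    + intros u v Hu1 Hv1. rewrite !Hp2 by (auto; apply rot_lt; auto; lia). apply wind_dist_rot.
    + intros j Hj. destruct (Hblock j Hj) as (H1 & H2 & H3).
      rewrite Hp1 by auto. unfold block_point. rewrite H2. reflexivity.
    + intros j j' Hj Hj' E.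
      destruct (Hblock j Hj) as (H1 & H2 & H3). destruct (Hblock j' Hj') as (H1' & H2' & H3').
      rewrite Hp2 by (auto; apply rot_lt; auto; lia).
      apply wind_dist_rot_phase0; auto. unfold block_point. rewrite H2, H2'. auto.
Qed.

End WindingMetric.

Lemma finite_upper_bound (G : nat -> R) (m : nat) :
  exists C, 1 <= C /\ forall j, (j < m)%nat -> G j <= C.
Proof.
  induction m as [|m [C [H1 H2]]].
  - exists 1. split; [lra|]. intros; lia.
  - exists (Rmax C (G m)). split; [eapply Rle_trans; [apply H1|apply Rmax_l]|].
    intros j Hj. destruct (Nat.eq_dec j m) as [->|Hne]; [apply Rmax_r|].
    eapply Rle_trans; [apply H2; lia|apply Rmax_l].
Qed.

(* The threshold [N0] makes [n eps/2] exceed twice the diameter of [A ∪ h A],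
   as [winding_configuration] requires. *)
Lemma rot_invariant_approximation {U : Type} (d : U -> U -> R) (h : U -> U) (A : list U)
  (x0 : U) (eps : R) :
  is_metric d -> urysohn_extension_property d -> isometric_embedding d d h -> 0 < eps ->
  exists N0 : nat, forall n, (N0 <= n)%nat -> exists m p, (1 <= m)%nat /\ rot_invariant d n p m /\
    forall a, In a A -> exists u, (u < m * n)%nat /\ p u = a /\ d (p (rot n u)) (h a) < eps.
Proof.
  intros Hd Hu Hh He.
  set (xs := nodup (fun x y : U => excluded_middle_informative (x = y)) (x0 :: A ++ map h A)).
  assert (Hin : forall a, In a (x0 :: A ++ map h A) -> In a xs) by (intros; apply nodup_In; auto).
  set (m := length xs).
  assert (Hm : (1 <= m)%nat).
  { assert (In x0 xs) as Hx0 by (apply Hin; left; auto).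
    unfold m. destruct xs; simpl in *; [contradiction|lia]. }
  destruct (finite_upper_bound (fun j => d (nth j xs x0) x0) m) as [C1 [HC1 HC1b]].
  set (C := 2 * C1).
  assert (Hdiam : forall j j', (j < m)%nat -> (j' < m)%nat -> d (nth j xs x0) (nth j' xs x0) <= C).
  { intros j j' Hj Hj'. destruct Hd as (_ & _ & ds & dt).
    pose proof (dt (nth j xs x0) x0 (nth j' xs x0)). rewrite (ds x0) in H.
    pose proof (HC1b j Hj). pose proof (HC1b j' Hj'). unfold C. lra. }
  set (delta := eps / 2).
  destruct (archimed (2 * C / delta)) as [Hz _].
  exists (Nat.max 2 (Z.to_nat (up (2 * C / delta)))). intros n Hn.
  assert (Hlong : 2 * C <= INR n * delta).
  { assert (IZR (up (2 * C / delta)) <= INR n).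
    { rewrite INR_IZR_INZ. apply IZR_le. destruct (Z_lt_le_dec (up (2 * C / delta)) 0); lia. }
    assert (2 * C / delta * delta = 2 * C) by (unfold delta; field; lra).
    unfold delta in *. nra. }
  destruct (winding_configuration U d h Hd Hh C delta ltac:(unfold delta; lra) ltac:(unfold C; lra)
              xs x0 n ltac:(lia) (NoDup_nodup _ _) Hdiam Hlong Hu) as (p & Hinv & Hp0 & Hstep).
  exists m, p. split; [auto|split; [auto|]].
  intros a Ha.
  destruct (In_nth xs a x0 (Hin a (or_intror (in_or_app _ _ _ (or_introl Ha))))) as [j [Hj Ej]].
  assert (Hha : In (h a) (x0 :: A ++ map h A)) by (right; apply in_or_app; right; apply in_map, Ha).
  destruct (In_nth xs (h a) x0 (Hin (h a) Hha)) as [j' [Hj' Ej']].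
  exists (j * n)%nat. split; [fold m in Hj; nia|].
  rewrite Hp0, Ej by auto. split; auto.
  rewrite <- Ej', <- Hp0 by auto. eapply Rle_lt_trans; [apply Hstep; auto; congruence|].
  unfold delta. lra.
Qed.

(** * Adding one orbit *)

Definition min_below (F : nat -> R) (B : nat) : R :=
  fold_right (fun w acc => Rmin (F w) acc) (F 0%nat) (seq 0 B).

Lemma min_below_le F B w : (w < B)%nat -> min_below F B <= F w.
Proof.
  intros Hw. unfold min_below. assert (Hi : In w (seq 0 B)) by (apply in_seq; lia).
  revert Hi. induction (seq 0 B) as [|a l IH]; simpl; [tauto|].
  intros [->|H]; [apply Rmin_l|]. eapply Rle_trans; [apply Rmin_r|auto].
Qed.

Lemma min_below_attained F B : (0 < B)%nat -> exists w, (w < B)%nat /\ min_below F B = F w.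
Proof.
  intros HB. unfold min_below.
  assert (Hl : forall l : list nat, (forall x, In x l -> x < B)%nat ->
    exists w, (w < B)%nat /\ fold_right (fun w acc => Rmin (F w) acc) (F 0%nat) l = F w).
  { induction l as [|a l IH]; simpl; intros Hl; [exists 0%nat; auto|].
    destruct IH as [w [Hw ->]]; auto. unfold Rmin. destruct Rle_dec; eauto. }
  apply Hl. intros x Hx. apply in_seq in Hx. lia.
Qed.

Lemma succ_mod_sub n i : (0 < n)%nat -> (i < n)%nat ->
  (S (n - (i + 1) mod n) mod n = (n - i) mod n)%nat.
Proof.
  intros Hn Hi. destruct (Nat.eq_dec (i + 1) n) as [E|E].
  - rewrite E, Nat.Div0.mod_same. replace (n - i)%nat with 1%nat by lia.
    replace (S (n - 0)) with (1 + 1 * n)%nat by lia. rewrite Nat.Div0.mod_add. reflexivity.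
  - rewrite (Nat.mod_small (i + 1)) by lia. f_equal. lia.
Qed.

Lemma succ_mod_inj n i k : (i < n)%nat -> (k < n)%nat ->
  ((i + 1) mod n = (k + 1) mod n)%nat -> i = k.
Proof.
  intros Hi Hk.
  assert (Hs : forall j, (j < n)%nat ->
            ((j + 1) mod n = if Nat.eq_dec (j + 1) n then 0 else j + 1)%nat).
  { intros j Hj. destruct Nat.eq_dec as [->|]; [apply Nat.Div0.mod_same|apply Nat.mod_small; lia]. }
  rewrite (Hs i Hi), (Hs k Hk). repeat destruct Nat.eq_dec; lia.
Qed.

Section Amalgamation.
Variable U : Type.
Variable d : U -> U -> R.
Hypothesis Hd : is_metric d.
Variable n L : nat.
Hypothesis Hn : (1 <= n)%nat.
Hypothesis HL : (1 <= L)%nat.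
Variable p : nat -> U.
Hypothesis HI : rot_invariant d n p L.
Variable y : U.
Hypothesis Hy : forall u, (u < L * n)%nat -> p u <> y.

Let B := (L * n)%nat.
Let B_pos : (0 < B)%nat. Proof. unfold B. nia. Qed.

Let dsym a b : d a b = d b a. Proof. apply Hd. Qed.
Let dtri a b c : d a c <= d a b + d b c. Proof. apply Hd. Qed.
Let dnn a b : 0 <= d a b. Proof. apply Hd. Qed.
Let dz a b : d a b = 0 <-> a = b. Proof. apply Hd. Qed.

(* The new index [B + i] stands for the [i]-th image of [y]; its distance to an
   old index [w] is that of [y] to [w] rotated back by [i] phases. *)
Definition dist_new (i w : nat) : R := d y (p (fpow (rot n) (n - i) w)).

(* Two distinct new points are as far apart as allowed: the shortest path
   through a single old point (free amalgamation). *)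
Definition dist_new_new (i k : nat) : R :=
  if Nat.eq_dec i k then 0 else min_below (fun w => dist_new i w + dist_new k w) B.

Definition amalgam_dist (u v : nat) : R :=
  if lt_dec u B then (if lt_dec v B then d (p u) (p v) else dist_new (v - B) u)
  else (if lt_dec v B then dist_new (u - B) v else dist_new_new (u - B) (v - B)).

Lemma dist_new_pos i w : (w < B)%nat -> 0 < dist_new i w.
Proof.
  intros Hw. unfold dist_new.
  destruct (Rle_lt_or_eq_dec 0 _ (dnn y (p (fpow (rot n) (n - i) w)))) as [H|H]; auto.
  exfalso. symmetry in H. apply dz in H. apply (Hy (fpow (rot n) (n - i) w)); auto.
  apply rot_pow_lt; unfold B in Hw; auto; lia.
Qed.

Lemma dist_new_le_old k a b : (a < B)%nat -> (b < B)%nat ->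
  dist_new k a <= d (p a) (p b) + dist_new k b.
Proof.
  intros Ha Hb. unfold dist_new. rewrite <- (rot_invariant_pow d n p L (n - k) a b); auto; try lia.
  rewrite (dsym (p (fpow _ _ a))), Rplus_comm. apply dtri.
Qed.

Lemma old_le_dist_new i a c : (a < B)%nat -> (c < B)%nat ->
  d (p a) (p c) <= dist_new i a + dist_new i c.
Proof.
  intros Ha Hc. unfold dist_new. rewrite <- (rot_invariant_pow d n p L (n - i) a c); auto; try lia.
  rewrite (dsym y (p (fpow (rot n) (n - i) a))). apply dtri.
Qed.

Lemma dist_new_new_nonneg i k : 0 <= dist_new_new i k.
Proof.
  unfold dist_new_new. destruct Nat.eq_dec; [lra|].
  destruct (min_below_attained (fun w => dist_new i w + dist_new k w) B B_pos) as [w [_ ->]].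
  unfold dist_new. pose proof (dnn y (p (fpow (rot n) (n - i) w))).
  pose proof (dnn y (p (fpow (rot n) (n - k) w))). lra.
Qed.

Lemma dist_new_new_le i k b : (b < B)%nat -> dist_new_new i k <= dist_new i b + dist_new k b.
Proof.
  intros Hb. unfold dist_new_new. destruct Nat.eq_dec.
  - unfold dist_new. pose proof (dnn y (p (fpow (rot n) (n - i) b))).
    pose proof (dnn y (p (fpow (rot n) (n - k) b))). lra.
  - apply (min_below_le (fun w => dist_new i w + dist_new k w)); auto.
Qed.

Lemma dist_new_le_new_new i k a : (a < B)%nat -> dist_new k a <= dist_new i a + dist_new_new i k.
Proof.
  intros Ha. unfold dist_new_new. destruct Nat.eq_dec; [subst; lra|].
  destruct (min_below_attained (fun w => dist_new i w + dist_new k w) B B_pos) as [w [Hw ->]].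
  pose proof (dist_new_le_old k a w Ha Hw). pose proof (old_le_dist_new i w a Hw Ha).
  rewrite (dsym (p w)) in *. lra.
Qed.

Lemma dist_new_new_sym i k : dist_new_new i k = dist_new_new k i.
Proof.
  unfold dist_new_new. destruct (Nat.eq_dec i k), (Nat.eq_dec k i); subst; try lia; auto.
  f_equal. apply functional_extensionality. intros; ring.
Qed.

Lemma dist_new_new_triangle i k l : dist_new_new i l <= dist_new_new i k + dist_new_new k l.
Proof.
  pose proof (dist_new_new_nonneg i k). pose proof (dist_new_new_nonneg k l).
  destruct (Nat.eq_dec i l) as [<-|E].
  - unfold dist_new_new at 1. destruct Nat.eq_dec; [lra|contradiction].
  - destruct (Nat.eq_dec i k) as [<-|E1].
    { unfold dist_new_new at 2. destruct Nat.eq_dec; [lra|contradiction]. }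
    unfold dist_new_new at 2. destruct Nat.eq_dec; [contradiction|].
    destruct (min_below_attained (fun w => dist_new i w + dist_new k w) B B_pos) as [w [Hw ->]].
    pose proof (dist_new_new_le i l w Hw). pose proof (dist_new_le_new_new k l w Hw). lra.
Qed.

Lemma amalgam_dist_pseudometric : pseudometric_on (S L * n) amalgam_dist.
Proof.
  intros a b c Ha Hb Hc. unfold amalgam_dist. split; [|split; [|split]].
  - destruct (lt_dec a B), (lt_dec b B); auto using dist_new_new_nonneg.
    all: unfold dist_new; auto.
  - destruct (lt_dec a B); [apply dz; auto|]. unfold dist_new_new. destruct Nat.eq_dec; auto; lia.
  - destruct (lt_dec a B), (lt_dec b B); auto using dist_new_new_sym.
  - destruct (lt_dec a B), (lt_dec b B), (lt_dec c B).
    + apply dtri.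
    + apply dist_new_le_old; auto.
    + apply old_le_dist_new; auto.
    + apply dist_new_le_new_new; auto.
    + rewrite Rplus_comm, dsym. apply dist_new_le_old; auto.
    + apply dist_new_new_le; auto.
    + rewrite dist_new_new_sym, Rplus_comm. apply dist_new_le_new_new; auto.
    + apply dist_new_new_triangle.
Qed.

Lemma amalgam_dist_pos a b : ~ (b < B)%nat -> a <> b -> 0 < amalgam_dist a b.
Proof.
  intros Hb Hab. unfold amalgam_dist. destruct (lt_dec a B), (lt_dec b B); try contradiction.
  - apply dist_new_pos; auto.
  - unfold dist_new_new. destruct Nat.eq_dec; [lia|].
    destruct (min_below_attained (fun w => dist_new (a - B) w + dist_new (b - B) w) B B_pos)
      as [w [Hw ->]].
    pose proof (dist_new_pos (a - B) w Hw). pose proof (dist_new_pos (b - B) w Hw). lra.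
Qed.

Lemma dist_new_rot i w : (i < n)%nat -> dist_new ((i + 1) mod n) (rot n w) = dist_new i w.
Proof.
  intros Hi. unfold dist_new. do 2 f_equal.
  rewrite fpow_succ_r, rot_pow_mod_exp, (rot_pow_mod_exp n (n - i)) by lia.
  rewrite succ_mod_sub by lia. reflexivity.
Qed.

Lemma dist_new_new_rot i k : (i < n)%nat -> (k < n)%nat ->
  dist_new_new ((i + 1) mod n) ((k + 1) mod n) = dist_new_new i k.
Proof.
  intros Hi Hk. unfold dist_new_new.
  destruct (Nat.eq_dec i k) as [<-|E]; [destruct Nat.eq_dec; [reflexivity|contradiction]|].
  destruct Nat.eq_dec as [E'|_]; [apply succ_mod_inj in E'; auto; contradiction|].
  assert (Hrot : forall w, (w < B)%nat -> (rot n w < B)%nat)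
    by (intros w Hw; apply rot_lt; unfold B in *; auto; lia).
  apply Rle_antisym.
  - destruct (min_below_attained (fun w => dist_new i w + dist_new k w) B B_pos) as [w [Hw ->]].
    rewrite <- (dist_new_rot i w Hi), <- (dist_new_rot k w Hk).
    apply (min_below_le (fun w => dist_new ((i + 1) mod n) w + dist_new ((k + 1) mod n) w)); auto.
  - destruct (min_below_attained (fun w => dist_new ((i + 1) mod n) w + dist_new ((k + 1) mod n) w)
                B B_pos) as [w [Hw ->]].
    set (w0 := fpow (rot n) (n - 1) w).
    assert (E0 : rot n w0 = w).
    { unfold w0. change (rot n (fpow (rot n) (n - 1) w)) with (fpow (rot n) (S (n - 1)) w).
      replace (S (n - 1)) with n by lia. apply rot_pow_period. lia. }
    rewrite <- E0, (dist_new_rot i w0 Hi), (dist_new_rot k w0 Hk).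
    apply (min_below_le (fun w => dist_new i w + dist_new k w)).
    unfold w0. apply rot_pow_lt; unfold B in Hw; auto; lia.
Qed.

Lemma amalgam_dist_rot a b : (a < S L * n)%nat -> (b < S L * n)%nat ->
  amalgam_dist (rot n a) (rot n b) = amalgam_dist a b.
Proof.
  intros Ha Hb.
  assert (Hold : forall u, (u < B)%nat -> (rot n u < B)%nat)
    by (intros u Hu; apply rot_lt; unfold B in *; auto; lia).
  assert (Hnew : forall u, (u < S L * n)%nat -> ~ (u < B)%nat ->
     ~ (rot n u < B)%nat /\ (rot n u - B = (u - B + 1) mod n)%nat /\ (u - B < n)%nat).
  { intros u Hu Hu'. unfold B in *.
    destruct (rot_last_block n L u) as [H1 H2]; [lia|lia|]. simpl in Hu. repeat split; auto; lia. }
  unfold amalgam_dist.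
  destruct (lt_dec a B) as [Ha'|Ha'], (lt_dec b B) as [Hb'|Hb'].
  - destruct (lt_dec (rot n a) B), (lt_dec (rot n b) B); try solve [exfalso; auto].
    apply HI; unfold B in *; auto.
  - destruct (lt_dec (rot n a) B); [|exfalso; auto].
    destruct (Hnew b Hb Hb') as (N1 & -> & N3).
    destruct (lt_dec (rot n b) B); [contradiction|]. apply dist_new_rot; auto.
  - destruct (lt_dec (rot n b) B); [|exfalso; auto].
    destruct (Hnew a Ha Ha') as (N1 & -> & N3).
    destruct (lt_dec (rot n a) B); [contradiction|]. apply dist_new_rot; auto.
  - destruct (Hnew a Ha Ha') as (N1 & -> & N3). destruct (Hnew b Hb Hb') as (M1 & -> & M3).
    destruct (lt_dec (rot n a) B), (lt_dec (rot n b) B); try contradiction.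
    apply dist_new_new_rot; auto.
Qed.

End Amalgamation.

Lemma rot_invariant_extend_old {U : Type} (d : U -> U -> R) (n L : nat) (p : nat -> U) (u0 : nat) :
  (1 <= n)%nat -> rot_invariant d n p L -> (u0 < L * n)%nat ->
  exists p', (forall u, (u < L * n)%nat -> p' u = p u) /\ rot_invariant d n p' (S L) /\
    p' (L * n)%nat = p u0.
Proof.
  intros Hn HI Hu0.
  set (q := fun u => if lt_dec u (L * n) then u else fpow (rot n) (u - L * n) u0).
  assert (Hq : forall u, (u < S L * n)%nat -> q (rot n u) = rot n (q u) /\ (q u < L * n)%nat).
  { intros u Hu. unfold q. destruct (lt_dec u (L * n)) as [H|H].
    - destruct lt_dec; [split; auto|]. exfalso. apply n0, rot_lt; auto; lia.
    - destruct (rot_last_block n L u) as [[H1 H2] H3]; [lia|lia|].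
      destruct lt_dec; [lia|]. split; [|apply rot_pow_lt; auto; lia].
      rewrite H3, <- rot_pow_mod_exp by lia.
      change (rot n (fpow (rot n) (u - L * n) u0)) with (fpow (rot n) (S (u - L * n)) u0).
      f_equal. lia. }
  exists (fun u => p (q u)). split; [|split].
  - intros u Hu. unfold q. destruct lt_dec; auto; contradiction.
  - intros u v Hu Hv. destruct (Hq u Hu) as [-> B1]. destruct (Hq v Hv) as [-> B2]. apply HI; auto.
  - unfold q. destruct lt_dec; [lia|]. rewrite Nat.sub_diag. reflexivity.
Qed.

Lemma rot_invariant_extend_new {U : Type} (d : U -> U -> R) (n L : nat) (p : nat -> U) (y : U) :
  is_metric d -> urysohn_extension_property d -> (1 <= n)%nat -> (1 <= L)%nat ->
  rot_invariant d n p L -> (forall u, (u < L * n)%nat -> p u <> y) ->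
  exists p', (forall u, (u < L * n)%nat -> p' u = p u) /\ rot_invariant d n p' (S L) /\
    p' (L * n)%nat = y.
Proof.
  intros Hd Hu Hn HL HI Hy.
  set (f := fun u => if lt_dec u (L * n) then p u else y).
  assert (Hself : forall i k, fpow (rot n) (n - (k - k)) i = i)
    by (intros i k; rewrite Nat.sub_diag, Nat.sub_0_r; apply rot_pow_period; lia).
  destruct (urysohn_realize d (amalgam_dist U d n L p y) (S L * n) (fun u => (u <= L * n)%nat) f
              Hd Hu (amalgam_dist_pseudometric U d Hd n L Hn HL p HI y)) as [p' [H1 H2]].
  - intros i Hi; simpl; lia.
  - intros i j Hi Hj Hj' Hij. apply amalgam_dist_pos; auto. lia.
  - intros i j Hi Hj. unfold amalgam_dist, dist_new, f.
    destruct (lt_dec i (L * n)), (lt_dec j (L * n)).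
    + reflexivity.
    + replace j with (L * n)%nat by lia. rewrite Hself. apply Hd.
    + replace i with (L * n)%nat by lia. rewrite Hself. reflexivity.
    + replace i with (L * n)%nat by lia. replace j with (L * n)%nat by lia.
      unfold dist_new_new. destruct Nat.eq_dec; [|lia]. apply Hd. reflexivity.
  - exists p'. split; [|split].
    + intros u Hu'. rewrite H1 by lia. unfold f. destruct lt_dec; auto; contradiction.
    + intros u v Hu' Hv'.
      rewrite !H2 by (auto; apply rot_lt; auto; lia). apply amalgam_dist_rot; auto.
    + rewrite H1 by lia. unfold f. destruct lt_dec; auto; lia.
Qed.

Lemma rot_invariant_extend {U : Type} (d : U -> U -> R) (n L : nat) (p : nat -> U) (y : U) :
  is_metric d -> urysohn_extension_property d -> (1 <= n)%nat -> (1 <= L)%nat ->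
  rot_invariant d n p L ->
  exists p', (forall u, (u < L * n)%nat -> p' u = p u) /\ rot_invariant d n p' (S L) /\
    exists u, (u < S L * n)%nat /\ p' u = y.
Proof.
  intros Hd Hu Hn HL HI.
  destruct (classic (exists u0, (u0 < L * n)%nat /\ p u0 = y)) as [[u0 [Hu0 <-]]|Hno].
  - destruct (rot_invariant_extend_old d n L p u0 Hn HI Hu0) as (p' & H1 & H2 & H3).
    exists p'. split; auto. split; auto. exists (L * n)%nat. split; auto. simpl. lia.
  - destruct (rot_invariant_extend_new d n L p y Hd Hu Hn HL HI) as (p' & H1 & H2 & H3).
    { intros u Hu' E. apply Hno. eauto. }
    exists p'. split; auto. split; auto. exists (L * n)%nat. split; auto. simpl. lia.
Qed.

(** * Exhaustion and passage to the limit *)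

(* Diagonal limit: the [k]-th extension adds the [k]-th point of the sequence [s]
   and never changes earlier values, so [u |-> P_u u] is eventually each [P_k]. *)
Lemma rot_invariant_exhaust {U : Type} (d : U -> U -> R) (n m : nat) (p0 s : nat -> U) :
  is_metric d -> urysohn_extension_property d -> (1 <= n)%nat -> (1 <= m)%nat ->
  rot_invariant d n p0 m ->
  exists q : nat -> U, (forall u, (u < m * n)%nat -> q u = p0 u) /\
    (forall u v, d (q (rot n u)) (q (rot n v)) = d (q u) (q v)) /\
    (forall k, exists u, q u = s k).
Proof.
  intros Hd Hu Hn Hm H0.
  assert (Hstep : forall k (p : nat -> U), exists p', rot_invariant d n p (m + k) ->
    (forall u, (u < (m + k) * n)%nat -> p' u = p u) /\ rot_invariant d n p' (S (m + k)) /\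
    exists u, (u < S (m + k) * n)%nat /\ p' u = s k).
  { intros k p. destruct (classic (rot_invariant d n p (m + k))) as [HI|HI].
    - destruct (rot_invariant_extend d n (m + k) p (s k) Hd Hu Hn ltac:(lia) HI) as [p' Hp'].
      exists p'. auto.
    - exists p. intros; contradiction. }
  destruct (choice _ (fun k => choice _ (Hstep k))) as [F HF].
  set (P := fix P (k : nat) : nat -> U := match k with O => p0 | S k' => F k' (P k') end).
  assert (HP : forall k, rot_invariant d n (P k) (m + k)).
  { induction k; simpl; [rewrite Nat.add_0_r; auto|].
    replace (m + S k)%nat with (S (m + k)) by lia. apply HF. auto. }
  assert (Hstable : forall k j u, (u < (m + k) * n)%nat -> P (k + j)%nat u = P k u).
  { intros k j u Hu'. induction j; [rewrite Nat.add_0_r; auto|].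
    replace (k + S j)%nat with (S (k + j)) by lia. simpl.
    rewrite (proj1 (HF _ _ (HP (k + j)%nat))); auto. nia. }
  set (q := fun u => P u u).
  assert (Hq : forall k u, (u < (m + k) * n)%nat -> q u = P k u).
  { intros k u Hu'. unfold q. destruct (le_lt_dec k u).
    - replace u with (k + (u - k))%nat at 1 by lia. apply Hstable; auto.
    - replace k with (u + (k - u))%nat by lia. symmetry. apply Hstable. nia. }
  exists q. split; [|split].
  - intros u Hu'. apply (Hq 0%nat). lia.
  - intros u v. set (K := (u + v)%nat).
    assert (u < (m + K) * n)%nat by (unfold K; nia).
    assert (v < (m + K) * n)%nat by (unfold K; nia).
    rewrite !(Hq K) by (auto; apply rot_lt; auto; lia). apply HP; auto.
  - intros k. destruct (HF k (P k) (HP k)) as [_ [_ [u [Hu' E]]]].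
    exists u. rewrite (Hq (S k)) by (replace (m + S k)%nat with (S (m + k)) by lia; auto). auto.
Qed.

Lemma inv_succ_lt eps : 0 < eps -> exists N, forall k, (N <= k)%nat -> / (INR k + 1) < eps.
Proof.
  intros He. destruct (archimed (/ eps)) as [Hz _].
  exists (Z.to_nat (up (/ eps))). intros k Hk.
  assert (IZR (up (/ eps)) <= INR k).
  { rewrite INR_IZR_INZ. apply IZR_le. destruct (Z_lt_le_dec (up (/ eps)) 0); lia. }
  rewrite <- (Rinv_inv eps). pose proof (pos_INR k).
  apply Rinv_lt_contravar; [apply Rmult_lt_0_compat; [apply Rinv_0_lt_compat|]|]; lra.
Qed.

Lemma dist_diff_le {U : Type} (d : U -> U -> R) a b a' b' : is_metric d ->
  Rabs (d a b - d a' b') <= d a a' + d b b'.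
Proof.
  intros (_ & _ & ds & dt).
  pose proof (dt a a' b). pose proof (dt a' b' b). pose proof (dt a' a b'). pose proof (dt a b b').
  rewrite (ds a' a), (ds b' b) in *. apply Rabs_le. split; lra.
Qed.

Definition dense_range {U : Type} (d : U -> U -> R) (q : nat -> U) : Prop :=
  forall x eps, 0 < eps -> exists u, d (q u) x < eps.

(* [g x] is the limit of [q (f u_k)] for any [q u_k -> x]. *)
Lemma dense_isometry_extension {U : Type} (d : U -> U -> R) (q : nat -> U) (f : nat -> nat) :
  is_metric d -> complete_metric d -> dense_range d q ->
  (forall u v, d (q (f u)) (q (f v)) = d (q u) (q v)) ->
  exists g, isometric_embedding d d g /\ (forall u, g (q u) = q (f u)).
Proof.
  intros Hd Hc Hden Hinv. pose proof Hd as (dnn & dz & ds & dt).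
  assert (Wex : forall x k, exists u, d (q u) x < / (INR k + 1)).
  { intros x k. apply Hden. apply Rinv_0_lt_compat. pose proof (pos_INR k). lra. }
  destruct (choice _ (fun x => choice _ (Wex x))) as [W HW].
  set (z := fun x k => q (f (W x k))).
  assert (Hcau : forall x, cauchy_seq d (z x)).
  { intros x eps He. destruct (inv_succ_lt (eps / 2)) as [N HN]; [lra|].
    exists N. intros a b Ha Hb. unfold z. rewrite Hinv.
    pose proof (HW x a). pose proof (HW x b). pose proof (HN a Ha). pose proof (HN b Hb).
    pose proof (dt (q (W x a)) x (q (W x b))). rewrite (ds x) in *. lra. }
  destruct (choice _ (fun x => Hc (z x) (Hcau x))) as [g Hg].
  exists g. split.
  - intros x y. apply cond_eq. intros eps He.
    destruct (Hg x (eps / 4)) as [N1 HN1]; [lra|].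
    destruct (Hg y (eps / 4)) as [N2 HN2]; [lra|].
    destruct (inv_succ_lt (eps / 4)) as [N3 HN3]; [lra|].
    set (k := Nat.max N1 (Nat.max N2 N3)).
    pose proof (HN1 k ltac:(lia)). pose proof (HN2 k ltac:(lia)). pose proof (HN3 k ltac:(lia)).
    pose proof (HW x k). pose proof (HW y k).
    pose proof (dist_diff_le d (g x) (g y) (z x k) (z y k) Hd) as Hgz.
    pose proof (dist_diff_le d (q (W x k)) (q (W y k)) x y Hd) as Hqx.
    unfold z in *. rewrite Hinv in Hgz.
    rewrite ds in H, H0.
    pose proof (Rabs_triang (d (g x) (g y) - d (q (W x k)) (q (W y k)))
                            (d (q (W x k)) (q (W y k)) - d x y)).
    replace (d (g x) (g y) - d (q (W x k)) (q (W y k)) + (d (q (W x k)) (q (W y k)) - d x y))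
      with (d (g x) (g y) - d x y) in * by ring.
    lra.
  - intros u. apply dz, Rle_antisym; [|apply dnn].
    apply Rle_plus_epsilon. intros eps He. rewrite Rplus_0_l.
    destruct (Hg (q u) (eps / 2)) as [N1 HN1]; [lra|].
    destruct (inv_succ_lt (eps / 2)) as [N2 HN2]; [lra|].
    set (k := Nat.max N1 N2).
    pose proof (HN1 k ltac:(lia)) as H1. pose proof (HN2 k ltac:(lia)). pose proof (HW (q u) k).
    pose proof (dt (g (q u)) (z (q u) k) (q (f u))) as Htri.
    unfold z in *. rewrite Hinv in Htri. rewrite ds in H1. lra.
Qed.

Lemma isometric_embeddings_eq_on_dense {U : Type} (d : U -> U -> R) (q : nat -> U)
  (g1 g2 : U -> U) :
  is_metric d -> dense_range d q -> isometric_embedding d d g1 -> isometric_embedding d d g2 ->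
  (forall u, g1 (q u) = g2 (q u)) -> forall x, g1 x = g2 x.
Proof.
  intros Hd Hden H1 H2 Hq x. pose proof Hd as (dnn & dz & ds & dt).
  apply dz, Rle_antisym; [|apply dnn].
  apply Rle_plus_epsilon. intros eps He. rewrite Rplus_0_l.
  destruct (Hden x (eps / 2)) as [u Hu]; [lra|].
  pose proof (dt (g1 x) (g1 (q u)) (g2 x)) as Htri.
  rewrite H1, Hq, H2, (ds (q u)) in Htri. rewrite (ds (q u)) in Hu. lra.
Qed.

Lemma fpow_semiconj {X Y : Type} (g : X -> X) (f : Y -> Y) (q : Y -> X) k u :
  (forall u, g (q u) = q (f u)) -> fpow g k (q u) = q (fpow f k u).
Proof. intros H. induction k; simpl; [reflexivity|]. rewrite IHk. apply H. Qed.

Lemma periodic_is_isometry {U : Type} (d : U -> U -> R) (g : U -> U) (n : nat) :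
  isometric_embedding d d g -> (1 <= n)%nat -> (forall x, fpow g n x = x) -> is_isometry d g.
Proof.
  intros Hg Hn Hper. split; auto. intros y. exists (fpow g (n - 1) y).
  change (g (fpow g (n - 1) y)) with (fpow g (S (n - 1)) y).
  replace (S (n - 1)) with n by lia. auto.
Qed.

Theorem mainTheorem16 (U : Type) (d : U -> U -> R) (S : nat -> Prop) :
  urysohn_space d ->
  infinite_nat_set S ->
  dense_in_Iso d (fun g => exists n, S n /\ forall x, fpow g n x = x).
Proof.
  intros (Hd & Hc & [s Hs] & Hu) HS h A eps [Hh _] He.
  destruct (rot_invariant_approximation d h A (s 0%nat) eps Hd Hu Hh He) as [N0 HN0].
  destruct (HS (Nat.max N0 1)) as [n [Hn HSn]].
  destruct (HN0 n ltac:(lia)) as (m & p & Hm & HI & Happ).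
  destruct (rot_invariant_exhaust d n m p s Hd Hu ltac:(lia) Hm HI) as (q & Hqp & Hqrot & Hqs).
  assert (Hden : dense_range d q).
  { intros x e He'. destruct (Hs x e He') as [k Hk]. destruct (Hqs k) as [u Hu'].
    exists u. rewrite Hu'. destruct Hd as (_ & _ & ds & _). rewrite ds. auto. }
  destruct (dense_isometry_extension d q (rot n) Hd Hc Hden Hqrot) as [g [Hg Hgq]].
  assert (Hper : forall x, fpow g n x = x).
  { apply (isometric_embeddings_eq_on_dense d q (fpow g n) (fun x => x) Hd Hden).
    - intros x y. apply fpow_isometry, Hg.
    - intros x y. reflexivity.
    - intros u. rewrite (fpow_semiconj g (rot n) q n u Hgq), rot_pow_period by lia. reflexivity. }
  exists g. split; [apply (periodic_is_isometry d g n); auto; lia|split; [eauto|]].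
  intros a Ha. destruct (Happ a Ha) as (u & Hu1 & <- & Hu3).
  rewrite <- (Hqp u Hu1) at 1. rewrite Hgq, Hqp by (apply rot_lt; lia). auto.
Qed.
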